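(* Fix an integer $k\ge0$ and for $m\ge0$ let $S_m=(-1)^k\sum_{i=0}^{m}\binom{2k}{m-i}\binom{4k+i}{i}$. Then $S_0=(-1)^k$, $S_1=(-1)^k(6k+1)$, and for all $m\ge0$, \[ (m+2)S_{m+2}=(6k+1)S_{m+1}+(m+1+2k)S_m . \] Moreover, the sequence $T_m=\sum_{i=0}^{2k}(-1)^i\binom{m+k+i}{m+k-i}\binom{m+3k-i}{m-k+i}$ satisfies the same recurrence $(m+2)T_{m+2}=(6k+1)T_{m+1}+(m+1+2k)T_m$ for all $m\ge 0$, with $T_0=(-1)^k$ and $T_1=(-1)^k(6k+1)$.
   Context: Binomial coefficients $\binom{a}{b}$ with integer $a\ge0$ are taken to be $0$ when $b<0$ or $b>a$. *)

From HB Require Import structures.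
From mathcomp Require Import all_boot all_order all_algebra.
Set Implicit Arguments. Unset Strict Implicit. Unset Printing Implicit Defensive.
Import Order.TTheory GRing.Theory Num.Theory.
Local Open Scope ring_scope.

(* Binomial coefficient C(a, b) with a : nat (a >= 0) and integer lower
   index b, taken to be 0 when b < 0 or b > a (the latter is built into 'C). *)
Definition binz (a : nat) (b : int) : int :=
  if b < 0 then 0 else ('C(a, `|b|%N))%:Z.

Definition Sseq (k m : nat) : int :=
  (-1) ^+ k * \sum_(i < m.+1) ('C(2 * k, m - i) * 'C(4 * k + i, i))%N%:Z.

Definition Tseq (k m : nat) : int :=
  \sum_(i < (2 * k).+1)
     (-1) ^+ i * binz (m + k + i)%N (m%:Z + k%:Z - i%:Z)
               * binz (m + 3 * k - i)%N (m%:Z - k%:Z + i%:Z).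

From HB Require Import structures.
From mathcomp Require Import all_boot all_order all_algebra.
From mathcomp Require Import ring zify.
Import Order.TTheory GRing.Theory Num.Theory.
Local Open Scope ring_scope.

(* Both recurrences are proved by creative telescoping.  Reversing the sum,
   S_m = (-1)^k sum_j C(2k,j) C(4k+m-j,4k), and the recurrence operator applied
   to the j-th summand equals G(j+1) - G(j) for G(j) = -j C(2k,j) C(4k+m+1-j,4k-1).
   With n = m + k, T_m = sum_i (-1)^i C(n+i,2i) C(n+2k-i,4k-2i), and the operator
   applied to the i-th summand equals H(i+1) - H(i) for
   H(i) = -k (-1)^i C(n+i,2i-2) C(n+2k+1-i,4k-2i).  Each of these summand identities
   becomes a polynomial identity once the binomials are multiplied by a common
   factorial, which turns them into a falling factorial times a polynomial. *)

Lemma ffactnSrz (n m : nat) : (n ^_ m.+1)%N%:Z = (n ^_ m)%N%:Z * (n%:Z - m%:Z).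
Proof.
rewrite ffactnSr PoszM; case: (leqP m n) => [le_mn | lt_nm]; first by rewrite subzn.
by rewrite ffact_small // !mul0r.
Qed.

Section BinomialTimesFactorial.

Variables N j : nat.
Local Notation X := (N ^_ j)%N%:Z.
Local Notation F := (j.+2)`!%:Z.

Lemma bin_ffact2 : 'C(N, j.+2)%:Z * F = X * ((N%:Z - j%:Z) * (N%:Z - j%:Z - 1)).
Proof. by rewrite -PoszM bin_ffact !ffactnSrz -addn1 PoszD; ring. Qed.

Lemma binS_ffact2 : 'C(N.+1, j.+2)%:Z * F = X * ((N%:Z + 1) * (N%:Z - j%:Z)).
Proof. by rewrite -PoszM bin_ffact ffactSS PoszM ffactnSrz -addn1 PoszD; ring. Qed.

Lemma binSS_ffact2 : 'C(N.+2, j.+2)%:Z * F = X * ((N%:Z + 2) * (N%:Z + 1)).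
Proof. by rewrite -PoszM bin_ffact !ffactSS !PoszM -addn2 -addn1 !PoszD; ring. Qed.

Lemma bin_ffact1 : 'C(N, j.+1)%:Z * F = X * ((N%:Z - j%:Z) * (j%:Z + 2)).
Proof. by rewrite -PoszM factS mulnCA bin_ffact PoszM ffactnSrz -addn2 PoszD; ring. Qed.

Lemma binS_ffact1 : 'C(N.+1, j.+1)%:Z * F = X * ((N%:Z + 1) * (j%:Z + 2)).
Proof. by rewrite -PoszM factS mulnCA bin_ffact ffactSS !PoszM -addn2 -addn1 !PoszD; ring. Qed.

Lemma bin_ffact0 : 'C(N, j)%:Z * F = X * ((j%:Z + 2) * (j%:Z + 1)).
Proof. by rewrite -PoszM !factS mulnCA (mulnCA 'C(N, j)) bin_ffact !PoszM -addn2 -addn1 !PoszD; ring. Qed.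

End BinomialTimesFactorial.

Lemma mul2_binSSn n : ('C(n.+2, n) * 2 = n.+2 * n.+1)%N.
Proof. by elim: n => [|n IHn] //; rewrite binS binSn mulnDl IHn; ring. Qed.

Lemma telescope_ord (V : zmodType) N (F : 'I_N -> V) (g : nat -> V) :
  (forall i : 'I_N, F i = g i.+1 - g i) -> \sum_(i < N) F i = g N - g 0%N.
Proof.
move=> eqF; rewrite (eq_bigr _ (fun i _ => eqF i)).
by rewrite -(big_mkord xpredT (fun i => g i.+1 - g i)) telescope_sumr.
Qed.

Lemma big_ord_window (V : zmodType) (h : nat -> V) N a b :
  (a <= b <= N)%N -> (forall i, (i < N)%N -> (i < a)%N || (b <= i)%N -> h i = 0) ->
  \sum_(i < N) h i = \sum_(a <= i < b) h i.
Proof.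
move=> /andP[le_ab le_bN] h0.
have zero_on m n : (n <= N)%N -> (forall i, (m <= i < n)%N -> (i < a)%N || (b <= i)%N) ->
    \sum_(m <= i < n) h i = 0.
  move=> le_nN out; rewrite big_nat_cond big1 // => i /andP[/andP[le_mi lt_in] _].
  by apply: h0; [exact: leq_trans lt_in le_nN | apply: out; rewrite le_mi].
rewrite -(big_mkord xpredT) (@big_cat_nat _ _ _ a) ?(leq_trans le_ab) //=.
rewrite (@big_cat_nat _ _ _ b a) //= (zero_on 0%N a) ?(zero_on b N) ?add0r ?addr0 //.
- by move=> i /andP[->]; rewrite orbT.
- exact: leq_trans le_ab le_bN.
- by move=> i /andP[_ ->].
Qed.

Definition Ssum (k m : nat) : int :=
  \sum_(j < (2 * k).+1) ('C(2 * k, j) * 'C(4 * k + m - j, 4 * k))%N%:Z.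

Lemma Sseq_Ssum k m : Sseq k m = (-1) ^+ k * Ssum k m.
Proof.
rewrite /Sseq /Ssum; congr (_ * _).
set h := fun j => ('C(2 * k, j) * 'C(4 * k + m - j, 4 * k))%N%:Z.
have h0 j : (m < j)%N || (2 * k < j)%N -> h j = 0.
  move=> out_j; rewrite /h; have [lt_2k_j | le_j_2k] := ltnP (2 * k) j.
    by rewrite bin_small.
  by rewrite (bin_small (n := 4 * k + m - j)) ?muln0 //; lia.
transitivity (\sum_(j < m.+1) h j).
  rewrite -(big_mkord xpredT (fun i => ('C(2 * k, m - i) * 'C(4 * k + i, i))%N%:Z)).
  rewrite big_rev_mkord subn0; apply: eq_bigr => j _; have lt_jm := ltn_ord j.
  rewrite /h subSS subKn // -[X in 'C(_ + _, X)](addKn (4 * k)) bin_sub ?leq_addr //.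
  by rewrite addnBA.
rewrite (@big_ord_window _ h _ 0 (minn m.+1 (2 * k).+1)) ?geq_minl //; last first.
  by move=> j _; rewrite ltn0 geq_min => /h0.
rewrite (@big_ord_window _ h _ 0 (minn m.+1 (2 * k).+1)) ?geq_minr //.
by move=> j _; rewrite ltn0 geq_min => /h0.
Qed.

Lemma Ssum_term_rec k m j : (0 < k)%N -> (j <= 2 * k)%N ->
  (m + 2)%N%:Z * 'C(4 * k + m.+2 - j, 4 * k)%:Z
  - (6 * k + 1)%N%:Z * 'C(4 * k + m.+1 - j, 4 * k)%:Z
  - (m + 1 + 2 * k)%N%:Z * 'C(4 * k + m - j, 4 * k)%:Z
  = - (2 * k - j)%N%:Z * 'C(4 * k + m - j, 4 * k - 1)%:Z
    + j%:Z * 'C(4 * k + m.+1 - j, 4 * k - 1)%:Z.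
Proof.
move=> k_gt0 le_j2k; set u := (4 * k + m - j)%N.
have [K eK] : exists K, (4 * k = K.+2)%N by exists (4 * k - 2)%N; lia.
have -> : (4 * k + m.+2 - j = u.+2)%N by rewrite /u; lia.
have -> : (4 * k + m.+1 - j = u.+1)%N by rewrite /u; lia.
have -> : (4 * k - 1 = K.+1)%N by lia.
have fact_neq0 : (K.+2)`!%:Z != 0 by rewrite eqz_nat -lt0n fact_gt0.
apply: (mulIf fact_neq0); rewrite eK !mulrBl !mulrDl -!mulrA.
rewrite binSS_ffact2 binS_ffact2 bin_ffact2 bin_ffact1 binS_ffact1.
have -> : u%:Z = 4 * k%:Z + m%:Z - j%:Z by rewrite /u; lia.
have -> : K%:Z = 4 * k%:Z - 2 by lia.
have -> : (2 * k - j)%N%:Z = 2 * k%:Z - j%:Z by lia.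
rewrite !PoszD ?PoszM; ring.
Qed.

Lemma Ssum_rec k m :
  (m + 2)%N%:Z * Ssum k m.+2 = (6 * k + 1)%N%:Z * Ssum k m.+1 + (m + 1 + 2 * k)%N%:Z * Ssum k m.
Proof.
have [->|k_gt0] := posnP k.
  by rewrite /Ssum !big_ord1 !subn0 !bin0 !muln1 -!PoszM -PoszD; congr Posz; lia.
apply/eqP; rewrite -subr_eq0 opprD addrA /Ssum !mulr_sumr -!sumrB.
pose g j := - j%:Z * ('C(2 * k, j) * 'C(4 * k + m.+1 - j, 4 * k - 1))%N%:Z.
rewrite (@telescope_ord _ _ _ g); first by rewrite /g bin_small ?mul0n ?mulr0 ?subr0.
move=> [j lt_j] /=.
have bin_left : (j.+1)%:Z * 'C(2 * k, j.+1)%:Z = (2 * k - j)%N%:Z * 'C(2 * k, j)%:Z.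
  by rewrite -!PoszM mul_bin_left.
transitivity ('C(2 * k, j)%:Z * ((m + 2)%N%:Z * 'C(4 * k + m.+2 - j, 4 * k)%:Z
  - (6 * k + 1)%N%:Z * 'C(4 * k + m.+1 - j, 4 * k)%:Z
  - (m + 1 + 2 * k)%N%:Z * 'C(4 * k + m - j, 4 * k)%:Z)); first by rewrite !PoszM; ring.
rewrite Ssum_term_rec // /g (_ : 4 * k + m.+1 - j.+1 = 4 * k + m - j)%N; last by lia.
transitivity (- ((j.+1)%:Z * 'C(2 * k, j.+1)%:Z) * 'C(4 * k + m - j, 4 * k - 1)%:Z
  + j%:Z * 'C(2 * k, j)%:Z * 'C(4 * k + m.+1 - j, 4 * k - 1)%:Z); last by rewrite !PoszM; ring.
by rewrite bin_left; ring.
Qed.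

Lemma Sseq_rec k m :
  (m + 2)%N%:Z * Sseq k m.+2 = (6 * k + 1)%N%:Z * Sseq k m.+1 + (m + 1 + 2 * k)%N%:Z * Sseq k m.
Proof. by rewrite !Sseq_Ssum !(mulrCA _ ((-1) ^+ k)) -mulrDr Ssum_rec. Qed.

Lemma Sseq0 k : Sseq k 0 = (-1) ^+ k.
Proof. by rewrite /Sseq big_ord1 subnn !bin0 mulr1. Qed.

Lemma Sseq1 k : Sseq k 1 = (-1) ^+ k * (6 * k + 1)%N%:Z.
Proof.
rewrite /Sseq big_ord_recr big_ord1 /= subn0 subnn !bin1 !bin0 ?addn0 muln1 mul1n.
by rewrite -PoszD; congr (_ * Posz _); lia.
Qed.

Definition tbin (n r i : nat) : int := 'C(n + r + i, 2 * i)%:Z.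

Definition tcert (n i : nat) : int := if i is i'.+1 then tbin n 1 i' else 0.

Lemma tbin_small n r i : (n + r < i)%N -> tbin n r i = 0.
Proof. by move=> lt_i; rewrite /tbin bin_small //; lia. Qed.

Lemma tbin_diag n r i : (n + r = i)%N -> tbin n r i = 1.
Proof. by move=> <-; rewrite /tbin addnn -mul2n binn. Qed.

Lemma binz_sub (a c : nat) : binz a (a%:Z - c%:Z) = 'C(a, c)%:Z.
Proof.
rewrite /binz; have [le_ca | lt_ac] := leqP c a.
  by rewrite subzn // ltz_nat ltn0 /= bin_sub.
by rewrite subr_lt0 ltz_nat lt_ac bin_small.
Qed.

Lemma Tseq_tbin k m r : Tseq k (m + r) =
  \sum_(i < (2 * k).+1) (-1) ^+ i * (tbin (m + k) r i * tbin (m + k) r (2 * k - i)).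
Proof.
apply: eq_bigr => i _; have le_i2k : (i <= 2 * k)%N by rewrite -ltnS.
rewrite -mulrA /tbin; congr (_ * (_ * _)).
  have -> : (m + r)%N%:Z + k%:Z - i%:Z = (m + r + k + i)%N%:Z - (2 * i)%N%:Z by lia.
  by rewrite binz_sub; congr (Posz 'C(_, _)); lia.
have -> : (m + r)%N%:Z - k%:Z + i%:Z = (m + r + 3 * k - i)%N%:Z - (2 * (2 * k - i))%N%:Z by lia.
by rewrite binz_sub; congr (Posz 'C(_, _)); lia.
Qed.

Section TbinTimesFactorial.

Variables n i : nat.
Local Notation X := ((n + i.+1) ^_ (2 * i))%N%:Z.
Local Notation F := (2 * i).+2`!%:Z.
Local Notation x := n%:Z.
Local Notation t := i%:Z.

Let tbinE r : tbin n r i.+1 = 'C((n + i.+1) + r, (2 * i).+2)%:Z.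
Proof. by rewrite /tbin; congr (Posz 'C(_, _)); lia. Qed.

Let sizeE : (n + i.+1)%N%:Z = x + t + 1.
Proof. by rewrite addnS -addn1 !PoszD. Qed.

Lemma tbin0_ffact : tbin n 0 i.+1 * F = X * ((x - t + 1) * (x - t)).
Proof. by rewrite tbinE addn0 bin_ffact2 sizeE PoszM; congr (_ * _); ring. Qed.

Lemma tbin1_ffact : tbin n 1 i.+1 * F = X * ((x + t + 2) * (x - t + 1)).
Proof. by rewrite tbinE addn1 binS_ffact2 sizeE PoszM; congr (_ * _); ring. Qed.

Lemma tbin2_ffact : tbin n 2 i.+1 * F = X * ((x + t + 3) * (x + t + 2)).
Proof. by rewrite tbinE addn2 binSS_ffact2 sizeE; congr (_ * _); ring. Qed.

Lemma tcert_ffact : tcert n i.+1 * F = X * ((2 * t + 2) * (2 * t + 1)).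
Proof.
rewrite /= /tbin -addnA add1n bin_ffact0 PoszM.
by congr (_ * _); ring.
Qed.

End TbinTimesFactorial.

(* The T-recurrence operator applied to the summand a_i b_j (j = 2k - i), minus
   the telescoping correction; [a0 a1 a2 d] stand for [tbin n r i] (r = 0, 1, 2)
   and [tcert n i], and [b0 b1 b2 e] likewise for j. *)
Definition Tform (m k a0 a1 a2 d b0 b1 b2 e : int) : int :=
  (m + 2) * (a2 * b2) - (6 * k + 1) * (a1 * b1) - (m + 1 + 2 * k) * (a0 * b0)
  - k * (a1 * e + d * b1).

Lemma Tform_sym m k a0 a1 a2 d b0 b1 b2 e :
  Tform m k a0 a1 a2 d b0 b1 b2 e = Tform m k b0 b1 b2 e a0 a1 a2 d.
Proof. by rewrite /Tform; ring. Qed.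

Lemma Tform_scale m k a0 a1 a2 d b0 b1 b2 e x y :
  Tform m k (a0 * x) (a1 * x) (a2 * x) (d * x) (b0 * y) (b1 * y) (b2 * y) (e * y)
  = Tform m k a0 a1 a2 d b0 b1 b2 e * (x * y).
Proof. by rewrite /Tform; ring. Qed.

Lemma Tform_tbin m k i j : (i + j = 2 * k)%N ->
  Tform m%:Z k%:Z (tbin (m + k) 0 i) (tbin (m + k) 1 i) (tbin (m + k) 2 i) (tcert (m + k) i)
                  (tbin (m + k) 0 j) (tbin (m + k) 1 j) (tbin (m + k) 2 j) (tcert (m + k) j) = 0.
Proof.
set n := (m + k)%N; have nE : n%:Z = m%:Z + k%:Z by rewrite PoszD.
have tbin_0 r : tbin n r 0 = 1 by rewrite /tbin muln0 bin0.
have fact_neq0 i' : (2 * i').+2`!%:Z != 0 by rewrite eqz_nat -lt0n fact_gt0.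
have boundary j' : (j'.+1 = 2 * k)%N ->
    Tform m k 1 1 1 0 (tbin n 0 j'.+1) (tbin n 1 j'.+1) (tbin n 2 j'.+1) (tcert n j'.+1) = 0.
  move=> ej; apply: (mulIf (fact_neq0 j')); rewrite mul0r -[_`!%:Z]mul1r.
  rewrite -Tform_scale mul0r !mul1r tbin0_ffact tbin1_ffact tbin2_ffact tcert_ffact nE.
  have -> : j'%:Z = 2 * k%:Z - 1 by lia.
  by rewrite /Tform; ring.
case: i j => [|i] [|j] eij.
- have -> : k = 0%N by lia.
  by rewrite !tbin_0 /Tform /=; ring.
- by rewrite !tbin_0 boundary.
- by rewrite Tform_sym !tbin_0 boundary // -eij addn0.
apply: (mulIf (mulf_neq0 (fact_neq0 i) (fact_neq0 j))); rewrite mul0r -Tform_scale.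
rewrite !tbin0_ffact !tbin1_ffact !tbin2_ffact !tcert_ffact nE.
have -> : j%:Z = 2 * k%:Z - 2 - i%:Z by lia.
by rewrite /Tform; ring.
Qed.

Lemma Tseq_rec k m :
  (m + 2)%N%:Z * Tseq k m.+2 = (6 * k + 1)%N%:Z * Tseq k m.+1 + (m + 1 + 2 * k)%N%:Z * Tseq k m.
Proof.
have := Tseq_tbin k m 0; have := Tseq_tbin k m 1; have := Tseq_tbin k m 2.
rewrite addn0 addn1 addn2 => -> -> ->; set n := (m + k)%N.
apply/eqP; rewrite -subr_eq0 opprD addrA !mulr_sumr -!sumrB.
pose g i := - k%:Z * (-1) ^+ i * (tcert n i * tcert n ((2 * k).+1 - i)).
rewrite (@telescope_ord _ _ _ g); first by rewrite /g subn0 subnn /= !mulr0 subr0.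
move=> [i lt_i] /=; have le_i2k : (i <= 2 * k)%N by rewrite -ltnS.
have eij : (i + (2 * k - i) = 2 * k)%N by rewrite subnKC.
transitivity ((-1) ^+ i * (Tform m%:Z k%:Z (tbin n 0 i) (tbin n 1 i) (tbin n 2 i) (tcert n i)
    (tbin n 0 (2 * k - i)) (tbin n 1 (2 * k - i)) (tbin n 2 (2 * k - i)) (tcert n (2 * k - i))
  + k%:Z * (tbin n 1 i * tcert n (2 * k - i) + tcert n i * tbin n 1 (2 * k - i)))).
  by rewrite /Tform !PoszD ?PoszM; ring.
rewrite Tform_tbin // add0r /g subSS subSn //= exprS; ring.
Qed.

Lemma Tseq0 k : Tseq k 0 = (-1) ^+ k.
Proof.
have := Tseq_tbin k 0 0; rewrite !add0n => ->.
set h := fun i => (-1) ^+ i * (tbin k 0 i * tbin k 0 (2 * k - i)).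
rewrite (@big_ord_window _ h _ k k.+1); first last.
- move=> i _; have [lt_ik _ | le_ki] := ltnP i k.
    by rewrite /h (@tbin_small k 0 (2 * k - i)) ?mulr0 //; lia.
  by rewrite orFb => lt_ki; rewrite /h tbin_small ?mul0r ?mulr0 //; lia.
- by apply/andP; split; lia.
by rewrite big_nat1 /h (_ : 2 * k - k = k)%N ?tbin_diag ?addn0 ?mulr1 //; lia.
Qed.

Lemma Tseq1 k : Tseq k 1 = (-1) ^+ k * (6 * k + 1)%N%:Z.
Proof.
have := Tseq_tbin k 0 1; rewrite !add0n => ->.
case: k => [|k']; first by rewrite big_ord1 /tbin !bin0.
set h := fun i => (-1) ^+ i * (tbin k'.+1 1 i * tbin k'.+1 1 (2 * k'.+1 - i)).
rewrite (@big_ord_window _ h _ k' (k'.+3)); first last.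
- move=> i _; have [lt_ik' _ | le_k'i] := ltnP i k'.
    by rewrite /h (@tbin_small _ _ (2 * k'.+1 - i)) ?mulr0 //; lia.
  by rewrite orFb => lt_i; rewrite /h tbin_small ?mul0r ?mulr0 //; lia.
- by apply/andP; split; lia.
rewrite big_ltn; last by lia.
rewrite big_ltn; last by lia.
rewrite big_nat1 /h.
rewrite (_ : 2 * k'.+1 - k' = k'.+2)%N; last by lia.
rewrite (_ : 2 * k'.+1 - k'.+1 = k'.+1)%N; last by lia.
rewrite (_ : 2 * k'.+1 - k'.+2 = k')%N; last by lia.
rewrite (@tbin_diag _ _ k'.+2) ?addn1 //.
have tbin_succ : tbin k'.+1 1 k'.+1 = (2 * k'.+1).+1%:Z.
  by rewrite /tbin (_ : k'.+1 + 1 + k'.+1 = (2 * k'.+1).+1)%N ?binSn //; lia.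
have tbin_succ2 : tbin k'.+1 1 k' * 2 = ((2 * k').+2 * (2 * k').+1)%N%:Z.
  by rewrite /tbin (_ : k'.+1 + 1 + k' = (2 * k').+2)%N -?PoszM ?mul2_binSSn //; lia.
transitivity ((-1) ^+ k' * (tbin k'.+1 1 k' * 2 - tbin k'.+1 1 k'.+1 * tbin k'.+1 1 k'.+1)).
  by rewrite !exprS; ring.
rewrite tbin_succ tbin_succ2 exprS mulN1r mulNr -mulrN; congr (_ * _); lia.
Qed.

Theorem mainTheorem13 (k : nat) :
  (Sseq k 0 = (-1) ^+ k /\
      Sseq k 1 = (-1) ^+ k * (6 * k + 1)%N%:Z /\
      (forall m : nat,
         (m + 2)%N%:Z * Sseq k m.+2
         = (6 * k + 1)%N%:Z * Sseq k m.+1 + (m + 1 + 2 * k)%N%:Z * Sseq k m) /\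
      (forall m : nat,
         (m + 2)%N%:Z * Tseq k m.+2
         = (6 * k + 1)%N%:Z * Tseq k m.+1 + (m + 1 + 2 * k)%N%:Z * Tseq k m) /\
      Tseq k 0 = (-1) ^+ k /\
      Tseq k 1 = (-1) ^+ k * (6 * k + 1)%N%:Z).
Proof.
split; first exact: Sseq0.
split; first exact: Sseq1.
split; first exact: Sseq_rec.
split; first exact: Tseq_rec.
split; first exact: Tseq0.
exact: Tseq1.
Qed.
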